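(* Let $\mathbf{k}$ be a commutative ring in which $2$ is invertible, and let $\mathcal{C}$ be a $\mathbf{k}$-linear supercategory whose underlying additive category is idempotent-complete. Then $(\mathcal{C}^{ct})^{ct}$ is equivalent to $\mathcal{C}$ as a supercategory.
   Context: An additive category is idempotent-complete if $\ker(p)$ exists for every object $X$ and $p\in\mathrm{End}(X)$ with $p^2=p$. A supercategory is a $\mathbf{k}$-linear additive category $\mathcal{C}$ with an endofunctor $\Pi$ and an isomorphism $\xi:\Pi^2\xrightarrow\sim\mathrm{id}$ with $\xi\circ\Pi=\Pi\circ\xi$. A superfunctor is a functor $F$ with an isomorphism $\alpha_F:F\Pi\xrightarrow\sim\Pi'F$ such that $(\xi'F)\circ(\Pi'\alpha_F)\circ(\alpha_F\Pi)=F\xi$; an equivalence of supercategories is a superfunctor whose functor is an equivalence. The Clifford twist $\mathcal{C}^{ct}$ has objects $(X,\varphi)$ with $\varphi:\Pi X\xrightarrow\sim X$, $\varphi\circ\Pi\varphi=\xi_X$, morphisms $f:X\to X'$ with $f\varphi=\varphi'\Pi f$, $\Pi^{ct}(X,\varphi)=(X,-\varphi)$, and $\xi^{ct}=\mathrm{id}$. *)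

From HB Require Import structures.
From mathcomp Require Import all_boot all_algebra.

Set Implicit Arguments.
Unset Strict Implicit.
Unset Printing Implicit Defensive.

Import GRing.Theory.
Local Open Scope ring_scope.

Record LinCat (k : pzRingType) := {
  ob :> Type;
  hom : ob -> ob -> lmodType k;
  comp : forall X Y Z : ob, hom Y Z -> hom X Y -> hom X Z;
  idm : forall X : ob, hom X X;
  compA : forall X Y Z W (h : hom Z W) (g : hom Y Z) (f : hom X Y),
      comp h (comp g f) = comp (comp h g) f;
  comp1m : forall X Y (f : hom X Y), comp (idm Y) f = f;
  compm1 : forall X Y (f : hom X Y), comp f (idm X) = f;
  comp_linr : forall X Y Z (g : hom Y Z) (a : k) (f f' : hom X Y),
      comp g (a *: f + f') = a *: comp g f + comp g f';
  comp_linl : forall X Y Z (f : hom X Y) (a : k) (g g' : hom Y Z),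
      comp (a *: g + g') f = a *: comp g f + comp g' f
}.
Arguments hom {k} C X Y : rename.
Arguments comp {k} C {X Y Z} g f : rename.
Arguments idm {k} C X : rename.

Definition is_iso k (C : LinCat k) (X Y : C) (f : hom C X Y) : Prop :=
  exists g : hom C Y X, comp C g f = idm C X /\ comp C f g = idm C Y.

Definition is_zero_object k (C : LinCat k) (Z : C) : Prop :=
  forall X : C, (forall f : hom C Z X, f = 0) /\ (forall f : hom C X Z, f = 0).

Definition is_biproduct k (C : LinCat k) (X Y S : C)
    (i1 : hom C X S) (i2 : hom C Y S) (p1 : hom C S X) (p2 : hom C S Y) : Prop :=
  [/\ comp C p1 i1 = idm C X, comp C p2 i2 = idm C Y,
      comp C p1 i2 = 0, comp C p2 i1 = 0 &
      comp C i1 p1 + comp C i2 p2 = idm C S].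

Definition additive_cat k (C : LinCat k) : Prop :=
  (exists Z : C, is_zero_object Z) /\
  (forall X Y : C, exists (S : C) (i1 : hom C X S) (i2 : hom C Y S)
      (p1 : hom C S X) (p2 : hom C S Y), is_biproduct i1 i2 p1 p2).

Definition is_kernel k (C : LinCat k) (X Y K : C) (p : hom C X Y) (i : hom C K X) :
    Prop :=
  comp C p i = 0 /\
  forall (Z : C) (f : hom C Z X), comp C p f = 0 ->
    exists g : hom C Z K, comp C i g = f /\
      forall g' : hom C Z K, comp C i g' = f -> g' = g.

Definition idempotent_complete k (C : LinCat k) : Prop :=
  forall (X : C) (p : hom C X X), comp C p p = p ->
    exists (K : C) (i : hom C K X), is_kernel p i.

Record LinFunctor k (C D : LinCat k) := {
  fob :> C -> D;
  fhom : forall X Y : C, hom C X Y -> hom D (fob X) (fob Y);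
  fcomp : forall X Y Z (g : hom C Y Z) (f : hom C X Y),
      fhom (comp C g f) = comp D (fhom g) (fhom f);
  fid : forall X, fhom (idm C X) = idm D (fob X);
  flin : forall X Y (a : k) (f g : hom C X Y), fhom (a *: f + g) = a *: fhom f + fhom g
}.
Arguments fhom {k C D} F {X Y} f : rename.

Definition is_natural k (C D : LinCat k) (F G : C -> D)
    (Fh : forall X Y : C, hom C X Y -> hom D (F X) (F Y))
    (Gh : forall X Y : C, hom C X Y -> hom D (G X) (G Y))
    (eta : forall X : C, hom D (F X) (G X)) : Prop :=
  forall (X Y : C) (f : hom C X Y), comp D (Gh X Y f) (eta X) = comp D (eta Y) (Fh X Y f).

Definition is_natural_iso k (C D : LinCat k) (F G : C -> D)
    (Fh : forall X Y : C, hom C X Y -> hom D (F X) (F Y))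
    (Gh : forall X Y : C, hom C X Y -> hom D (G X) (G Y))
    (eta : forall X : C, hom D (F X) (G X)) : Prop :=
  is_natural Fh Gh eta /\ forall X, is_iso (eta X).

Definition is_equivalence k (C D : LinCat k) (F : LinFunctor C D) : Prop :=
  exists (G : D -> C) (Gh : forall X Y : D, hom D X Y -> hom C (G X) (G Y)),
    (forall X Y Z (g : hom D Y Z) (f : hom D X Y),
        Gh X Z (comp D g f) = comp C (Gh Y Z g) (Gh X Y f)) /\
    (forall X, Gh X X (idm D X) = idm C (G X)) /\
    (exists eta : forall X : C, hom C (G (F X)) X,
        is_natural_iso (fun X Y f => Gh (F X) (F Y) (fhom F f))
                       (fun X Y f => f) eta) /\
    (exists eps : forall Y : D, hom D (F (G Y)) Y,
        is_natural_iso (fun X Y f => fhom F (Gh X Y f)) (fun X Y f => f) eps).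

Record SuperCat k := {
  scat :> LinCat k;
  Pi : LinFunctor scat scat;
  xi : forall X : scat, hom scat (Pi (Pi X)) X;
  xi_nat : forall (X Y : scat) (f : hom scat X Y),
      comp scat f (xi X) = comp scat (xi Y) (fhom Pi (fhom Pi f));
  xi_iso : forall X : scat, is_iso (xi X);
  xi_Pi : forall X : scat, xi (Pi X) = fhom Pi (xi X)
}.
Arguments Pi {k} s : rename.
Arguments xi {k} s X : rename.

Record SuperFunctor k (C D : SuperCat k) := {
  sfun :> LinFunctor C D;
  alpha : forall X : C, hom D (sfun (Pi C X)) (Pi D (sfun X));
  alpha_nat : forall (X Y : C) (f : hom C X Y),
      comp D (fhom (Pi D) (fhom sfun f)) (alpha X)
      = comp D (alpha Y) (fhom sfun (fhom (Pi C) f));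
  alpha_iso : forall X : C, is_iso (alpha X);
  alpha_coh : forall X : C,
      comp D (xi D (sfun X)) (comp D (fhom (Pi D) (alpha X)) (alpha (Pi C X)))
      = fhom sfun (xi C X)
}.

Definition is_super_equivalence k (C D : SuperCat k) (F : SuperFunctor C D) : Prop :=
  is_equivalence F.

Lemma comp_0r k (C : LinCat k) (X Y Z : C) (g : hom C Y Z) :
  comp C g (0 : hom C X Y) = 0.
Proof.
have H := comp_linr (X:=X) g 1 0 0; rewrite !scale1r addr0 in H.
by apply: (@addrI _ (comp C g 0)); rewrite addr0 -H.
Qed.

Lemma comp_0l k (C : LinCat k) (X Y Z : C) (f : hom C X Y) :
  comp C (0 : hom C Y Z) f = 0.
Proof.
have H := comp_linl (Z:=Z) f 1 0 0; rewrite !scale1r addr0 in H.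
by apply: (@addrI _ (comp C 0 f)); rewrite addr0 -H.
Qed.

Lemma comp_Nr k (C : LinCat k) (X Y Z : C) (g : hom C Y Z) (f : hom C X Y) :
  comp C g (- f) = - comp C g f.
Proof.
have H := comp_linr g 1 f (- f); rewrite !scale1r subrr comp_0r in H.
by apply/eqP; rewrite -addr_eq0 addrC -H.
Qed.

Lemma comp_Nl k (C : LinCat k) (X Y Z : C) (g : hom C Y Z) (f : hom C X Y) :
  comp C (- g) f = - comp C g f.
Proof.
have H := comp_linl f 1 g (- g); rewrite !scale1r subrr comp_0l in H.
by apply/eqP; rewrite -addr_eq0 addrC -H.
Qed.

Lemma fhom0 k (C D : LinCat k) (F : LinFunctor C D) (X Y : C) :
  fhom F (0 : hom C X Y) = 0.
Proof.
have H := flin F 1 (0 : hom C X Y) 0; rewrite !scale1r addr0 in H.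
by apply: (@addrI _ (fhom F (0 : hom C X Y))); rewrite addr0 -H.
Qed.

Lemma fhomN k (C D : LinCat k) (F : LinFunctor C D) (X Y : C) (f : hom C X Y) :
  fhom F (- f) = - fhom F f.
Proof.
have H := flin F 1 f (- f); rewrite !scale1r subrr fhom0 in H.
by apply/eqP; rewrite -addr_eq0 addrC -H.
Qed.

Record ctOb k (C : SuperCat k) := CtOb {
  ctX : C;
  ctphi : hom C (Pi C ctX) ctX;
  ctphi_iso : is_iso ctphi;
  ctphi_sq : comp C ctphi (fhom (Pi C) ctphi) = xi C ctX
}.
Arguments ctX {k C} c : rename.
Arguments ctphi {k C} c : rename.

Definition ct_pred k (C : SuperCat k) (a b : ctOb C) :
    pred (hom C (ctX a) (ctX b)) :=
  fun f => comp C f (ctphi a) == comp C (ctphi b) (fhom (Pi C) f).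

Arguments ct_pred {k C} a b f.

Lemma ct_pred_closed k (C : SuperCat k) (a b : ctOb C) :
  GRing.subsemimod_closed (ct_pred a b).
Proof.
split; [split|].
- by rewrite unfold_in /ct_pred /= comp_0l fhom0 comp_0r.
- move=> f g; rewrite !unfold_in /ct_pred => /eqP Hf /eqP Hg; apply/eqP.
  have E1 := comp_linl (ctphi a) 1 f g; rewrite !scale1r in E1.
  have E2 := flin (Pi C) 1 f g; rewrite !scale1r in E2.
  have E3 := comp_linr (ctphi b) 1 (fhom (Pi C) f) (fhom (Pi C) g).
  rewrite !scale1r in E3.
  by rewrite E1 E2 E3 Hf Hg.
- move=> c f; rewrite !unfold_in /ct_pred => /eqP Hf; apply/eqP.
  have E1 := comp_linl (ctphi a) c f 0; rewrite addr0 comp_0l addr0 in E1.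
  have E2 := flin (Pi C) c f 0; rewrite addr0 fhom0 addr0 in E2.
  have E3 := comp_linr (ctphi b) c (fhom (Pi C) f) 0.
  rewrite addr0 comp_0r addr0 in E3.
  by rewrite E1 E2 E3 Hf.
Qed.

HB.instance Definition _ k (C : SuperCat k) (a b : ctOb C) :=
  GRing.isSubmodClosed.Build k (hom C (ctX a) (ctX b)) (ct_pred a b)
    (ct_pred_closed a b).

Definition ctHom k (C : SuperCat k) (a b : ctOb C) :=
  {f : hom C (ctX a) (ctX b) | ct_pred a b f}.

HB.instance Definition _ k (C : SuperCat k) (a b : ctOb C) :=
  [isSub for (@sval _ _ : ctHom a b -> _)].
HB.instance Definition _ k (C : SuperCat k) (a b : ctOb C) :=
  [Choice of ctHom a b by <:].
HB.instance Definition _ k (C : SuperCat k) (a b : ctOb C) :=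
  [SubChoice_isSubLmodule of ctHom a b by <:].


Lemma ctP k (C : SuperCat k) (a b : ctOb C) (f : ctHom a b) :
  comp C (val f) (ctphi a) = comp C (ctphi b) (fhom (Pi C) (val f)).
Proof. by case: f => f /= /eqP. Qed.

Lemma ct_in k (C : SuperCat k) (a b : ctOb C) (f : hom C (ctX a) (ctX b)) :
  comp C f (ctphi a) = comp C (ctphi b) (fhom (Pi C) f) -> ct_pred a b f.
Proof. by move=> H; apply/eqP. Qed.

Lemma ctcomp_subproof k (C : SuperCat k) (a b c : ctOb C)
    (g : ctHom b c) (f : ctHom a b) : ct_pred a c (comp C (val g) (val f)).
Proof.
apply: ct_in; rewrite -compA ctP compA ctP -compA.
by rewrite -(fcomp (Pi C)).
Qed.

Definition ctcomp k (C : SuperCat k) (a b c : ctOb C)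
    (g : ctHom b c) (f : ctHom a b) : ctHom a c :=
  exist _ (comp C (val g) (val f)) (ctcomp_subproof g f).

Lemma ctid_subproof k (C : SuperCat k) (a : ctOb C) : ct_pred a a (idm C (ctX a)).
Proof. by apply: ct_in; rewrite fid comp1m compm1. Qed.

Definition ctid k (C : SuperCat k) (a : ctOb C) : ctHom a a :=
  exist _ (idm C (ctX a)) (ctid_subproof a).

Lemma val_lin k (C : SuperCat k) (a b : ctOb C) (c : k) (f g : ctHom a b) :
  val (c *: f + g) = c *: val f + val g.
Proof. by rewrite raddfD /=. Qed.

Definition ctLinCat k (C : SuperCat k) : LinCat k.
Proof.
refine {| ob := ctOb C; hom := fun a b => (ctHom a b : lmodType k);
          comp := @ctcomp k C; idm := @ctid k C |}.
- by move=> *; apply: val_inj; rewrite /= compA.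
- by move=> *; apply: val_inj; rewrite /= comp1m.
- by move=> *; apply: val_inj; rewrite /= compm1.
- by move=> X Y Z g c f f'; apply: val_inj; rewrite /= comp_linr.
- by move=> X Y Z f c g g'; apply: val_inj; rewrite /= comp_linl.
Defined.

Lemma ctPi_iso k (C : SuperCat k) (a : ctOb C) : is_iso (- ctphi a).
Proof.
case: (ctphi_iso a) => g [H1 H2]; exists (- g).
by rewrite !(comp_Nl, comp_Nr) !opprK H1 H2.
Qed.

Lemma ctPi_sq k (C : SuperCat k) (a : ctOb C) :
  comp C (- ctphi a) (fhom (Pi C) (- ctphi a)) = xi C (ctX a).
Proof. by rewrite fhomN comp_Nl comp_Nr opprK ctphi_sq. Qed.

Definition ctPiOb k (C : SuperCat k) (a : ctOb C) : ctOb C :=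
  CtOb (ctPi_iso a) (ctPi_sq a).

Lemma ctPihom_subproof k (C : SuperCat k) (a b : ctOb C) (f : ctHom a b) :
  ct_pred (ctPiOb a) (ctPiOb b) (val f).
Proof. by apply: ct_in; rewrite /= comp_Nr comp_Nl ctP. Qed.

Definition ctPihom k (C : SuperCat k) (a b : ctOb C) (f : ctHom a b) :
    ctHom (ctPiOb a) (ctPiOb b) :=
  exist _ (val f) (ctPihom_subproof f).

Definition ctPi k (C : SuperCat k) : LinFunctor (ctLinCat C) (ctLinCat C).
Proof.
refine {| fob := (@ctPiOb k C : ctLinCat C -> ctLinCat C);
          fhom := fun a b f => @ctPihom k C a b f |}.
- by move=> *; apply: val_inj.
- by move=> *; apply: val_inj.
- by move=> *; apply: val_inj.
Defined.

Lemma ctxi_subproof k (C : SuperCat k) (a : ctOb C) :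
  ct_pred (ctPiOb (ctPiOb a)) a (idm C (ctX a)).
Proof. by apply: ct_in; rewrite /= opprK comp1m fid compm1. Qed.

Definition ctxi k (C : SuperCat k) (a : ctOb C) :
    ctHom (ctPiOb (ctPiOb a)) a :=
  exist _ (idm C (ctX a)) (ctxi_subproof a).

Lemma ctxiV_subproof k (C : SuperCat k) (a : ctOb C) :
  ct_pred a (ctPiOb (ctPiOb a)) (idm C (ctX a)).
Proof. by apply: ct_in; rewrite /= opprK comp1m fid compm1. Qed.

Definition ctSuperCat k (C : SuperCat k) : SuperCat k.
Proof.
refine {| scat := ctLinCat C; Pi := ctPi C;
          xi := (@ctxi k C : forall a : ctLinCat C,
                   hom (ctLinCat C) (ctPi C (ctPi C a)) a) |}.
- by move=> a b f; apply: val_inj; rewrite /= comp1m compm1.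
- move=> a; exists (exist _ (idm C (ctX a)) (ctxiV_subproof a)).
  by split; apply: val_inj; rewrite /= comp1m.
- by move=> a; apply: val_inj.
Defined.

From HB Require Import structures.
From mathcomp Require Import all_boot all_algebra.
From Stdlib Require Import ClassicalEpsilon.

Set Implicit Arguments.
Unset Strict Implicit.
Unset Printing Implicit Defensive.

Import GRing.Theory.
Local Open Scope ring_scope.

(* An object of (C^ct)^ct is an object X of C with an isomorphism
   phi : Pi X -> X satisfying phi o Pi phi = xi, together with an involution
   psi of X anticommuting with phi: psi o phi = - phi o Pi psi.  Since 2 is
   invertible, e = (1 + psi)/2 is an idempotent, and F sends the object to
   the image of e; phi carries Pi (im e) onto im (1 - e), which provides the
   superfunctor structure of F.  A quasi-inverse is G Y = Y (+) Pi Y, where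
   phi swaps the summands (twisted by xi) and psi = diag(1, -1): the image of
   (1 + psi)/2 is Y again, and X = im e (+) Pi (im e) via [i, phi o Pi i]. *)

Lemma scale_half (k : pzRingType) (u : k) (V : lmodType k) (v : V) :
  2 * u = 1 -> u *: v + u *: v = v.
Proof. by move=> hu; rewrite -scalerDl -mulr2n -mulr_natl hu scale1r. Qed.

Section LinearCategory.
Variables (k : pzRingType) (C : LinCat k).

Lemma compDr (X Y Z : C) (g : hom C Y Z) (f f' : hom C X Y) :
  comp C g (f + f') = comp C g f + comp C g f'.
Proof. by have := comp_linr g 1 f f'; rewrite !scale1r. Qed.

Lemma compDl (X Y Z : C) (g g' : hom C Y Z) (f : hom C X Y) :
  comp C (g + g') f = comp C g f + comp C g' f.
Proof. by have := comp_linl f 1 g g'; rewrite !scale1r. Qed.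

Lemma compZr (X Y Z : C) (g : hom C Y Z) a (f : hom C X Y) :
  comp C g (a *: f) = a *: comp C g f.
Proof. by have := comp_linr g a f 0; rewrite !addr0 comp_0r addr0. Qed.

Lemma compZl (X Y Z : C) (g : hom C Y Z) a (f : hom C X Y) :
  comp C (a *: g) f = a *: comp C g f.
Proof. by have := comp_linl f a g 0; rewrite !addr0 comp_0l addr0. Qed.

Lemma compBr (X Y Z : C) (g : hom C Y Z) (f f' : hom C X Y) :
  comp C g (f - f') = comp C g f - comp C g f'.
Proof. by rewrite compDr comp_Nr. Qed.

Lemma compBl (X Y Z : C) (g g' : hom C Y Z) (f : hom C X Y) :
  comp C (g - g') f = comp C g f - comp C g' f.
Proof. by rewrite compDl comp_Nl. Qed.

Lemma comp_reassoc (X Y Z : C) (a : hom C Y Z) (b : hom C X Y) (c : hom C X Z) :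
  comp C a b = c -> forall W (h : hom C Z W), comp C (comp C h a) b = comp C h c.
Proof. by move=> E W h; rewrite -compA E. Qed.

Lemma hom_ext_sum (X Y S Z : C) (i1 : hom C X S) (i2 : hom C Y S)
    (p1 : hom C S X) (p2 : hom C S Y) (g h : hom C S Z) :
  comp C i1 p1 + comp C i2 p2 = idm C S ->
  comp C g i1 = comp C h i1 -> comp C g i2 = comp C h i2 -> g = h.
Proof.
by move=> E H1 H2; rewrite -[g]compm1 -[h]compm1 -E !compDr !compA H1 H2.
Qed.

Lemma iso_conj (X Y : C) (phi : hom C X Y) (phi' : hom C Y X)
    (a : hom C X X) (b : hom C Y Y) :
  comp C phi' phi = idm C X -> comp C phi phi' = idm C Y ->
  comp C phi a = comp C b phi -> comp C a phi' = comp C phi' b.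
Proof.
move=> H1 H2 E.
by rewrite -[LHS]comp1m -H1 -compA (compA phi) E -compA H2 compm1.
Qed.

Record idem_split (X : C) (e : hom C X X) := IdemSplit {
  img : C;
  inc : hom C img X;
  ret : hom C X img;
  ret_inc : comp C ret inc = idm C img;
  inc_ret : comp C inc ret = e }.

Lemma idem_inc (X : C) (e : hom C X X) (s : idem_split e) :
  comp C e (inc s) = inc s.
Proof.
have := congr1 (fun h => comp C h (inc s)) (inc_ret s).
by rewrite /= -compA ret_inc compm1.
Qed.

Lemma ret_idem (X : C) (e : hom C X X) (s : idem_split e) :
  comp C (ret s) e = ret s.
Proof.
by have := congr1 (comp C (ret s)) (inc_ret s); rewrite /= compA ret_inc comp1m.
Qed.

(* The image of e is the kernel of the complementary idempotent 1 - e. *)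
Lemma idem_split_inhabited (X : C) (e : hom C X X) :
  idempotent_complete C -> comp C e e = e -> inhabited (idem_split e).
Proof.
move=> Cidem He.
have Hp : comp C (idm C X - e) (idm C X - e) = idm C X - e.
  by rewrite compBl !compBr comp1m compm1 He comp1m subrr subr0.
case: (Cidem X _ Hp) => K [i [Hi Hu]].
have pe : comp C (idm C X - e) e = 0 by rewrite compBl comp1m He subrr.
case: (Hu X e pe) => r [Hr _].
have ei : comp C e i = i.
  by move/eqP: Hi; rewrite compBl comp1m subr_eq0 eq_sym => /eqP.
case: (Hu K i Hi) => g [_ Hg].
have ri : comp C r i = idm C K.
  by rewrite (Hg (idm C K) (compm1 i)); apply: Hg; rewrite compA Hr.
exact: (inhabits (IdemSplit ri Hr)).
Qed.

Record biprod (X Y : C) := Biprod {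
  bip_obj : C;
  bip_in1 : hom C X bip_obj;
  bip_in2 : hom C Y bip_obj;
  bip_pr1 : hom C bip_obj X;
  bip_pr2 : hom C bip_obj Y;
  bip_is_biproduct : is_biproduct bip_in1 bip_in2 bip_pr1 bip_pr2 }.

Lemma biprod_inhabited (X Y : C) : additive_cat C -> inhabited (biprod X Y).
Proof.
by case=> _ /(_ X Y) [S [i1 [i2 [p1 [p2 H]]]]]; exact: inhabits (Biprod H).
Qed.

Section Biproduct.
Variables (X Y : C) (b : biprod X Y).

Lemma bip_pr1_in1 : comp C (bip_pr1 b) (bip_in1 b) = idm C X.
Proof. by case: (bip_is_biproduct b). Qed.
Lemma bip_pr2_in2 : comp C (bip_pr2 b) (bip_in2 b) = idm C Y.
Proof. by case: (bip_is_biproduct b). Qed.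
Lemma bip_pr1_in2 : comp C (bip_pr1 b) (bip_in2 b) = 0.
Proof. by case: (bip_is_biproduct b). Qed.
Lemma bip_pr2_in1 : comp C (bip_pr2 b) (bip_in1 b) = 0.
Proof. by case: (bip_is_biproduct b). Qed.
Lemma bip_sum :
  comp C (bip_in1 b) (bip_pr1 b) + comp C (bip_in2 b) (bip_pr2 b) = idm C _.
Proof. by case: (bip_is_biproduct b). Qed.

End Biproduct.
End LinearCategory.

Section LinearFunctor.
Variables (k : pzRingType) (C D : LinCat k) (F : LinFunctor C D).

Lemma fhomD (X Y : C) (f g : hom C X Y) : fhom F (f + g) = fhom F f + fhom F g.
Proof. by have := flin F 1 f g; rewrite !scale1r. Qed.

Lemma fhomZ (X Y : C) a (f : hom C X Y) : fhom F (a *: f) = a *: fhom F f.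
Proof. by have := flin F a f 0; rewrite !addr0 fhom0 addr0. Qed.

Lemma fhomB (X Y : C) (f g : hom C X Y) : fhom F (f - g) = fhom F f - fhom F g.
Proof. by rewrite fhomD fhomN. Qed.

Lemma fhom_comp0 (X Y Z : C) (a : hom C Y Z) (b : hom C X Y) :
  comp C a b = 0 -> comp D (fhom F a) (fhom F b) = 0.
Proof. by move=> E; rewrite -fcomp E fhom0. Qed.

Lemma fhom_comp1 (X Y : C) (a : hom C Y X) (b : hom C X Y) :
  comp C a b = idm C X -> comp D (fhom F a) (fhom F b) = idm D _.
Proof. by move=> E; rewrite -fcomp E fid. Qed.

Lemma fhom_sum (X Y S : C) (i1 : hom C X S) (i2 : hom C Y S)
    (p1 : hom C S X) (p2 : hom C S Y) :
  comp C i1 p1 + comp C i2 p2 = idm C S ->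
  comp D (fhom F i1) (fhom F p1) + comp D (fhom F i2) (fhom F p2) = idm D _.
Proof. by move=> E; rewrite -!fcomp -fhomD E fid. Qed.

Lemma fhom_inc_ret (X : C) (e : hom C X X) (s : idem_split e) :
  comp D (fhom F (inc s)) (fhom F (ret s)) = fhom F e.
Proof. by rewrite -fcomp inc_ret. Qed.

Lemma fhom_idem_inc (X : C) (e : hom C X X) (s : idem_split e) :
  comp D (fhom F e) (fhom F (inc s)) = fhom F (inc s).
Proof. by rewrite -fcomp idem_inc. Qed.

End LinearFunctor.

Section CliffordTwist.
Variables (k : pzRingType) (C : SuperCat k).

Lemma is_iso_Pi_sqrt (X : C) (phi : hom C (Pi C X) X) :
  comp C phi (fhom (Pi C) phi) = xi C X -> is_iso phi.
Proof.
move=> H; case: (xi_iso X) => xv [H1 H2].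
case: (xi_iso (Pi C X)) => yv [H3 H4].
exists (comp C (fhom (Pi C) phi) xv); split; last by rewrite compA H H2.
have N : comp C xv phi = comp C (fhom (Pi C) (fhom (Pi C) phi)) yv.
  rewrite -[LHS]compm1 -H4 compA -[comp C (comp C xv phi) _]compA xi_nat.
  by rewrite compA H1 comp1m.
by rewrite -compA N compA -fcomp H -xi_Pi H4.
Qed.

Lemma ct_pred_inv (a b : ctOb C) (f : hom C (ctX a) (ctX b))
    (g : hom C (ctX b) (ctX a)) :
  ct_pred a b f -> comp C g f = idm C _ -> comp C f g = idm C _ -> ct_pred b a g.
Proof.
move=> /eqP Hf H1 H2; apply/eqP.
rewrite -[LHS]compm1 -fid -H2 fcomp compA -(compA g (ctphi b)) -Hf.
by rewrite compA H1 comp1m.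
Qed.

End CliffordTwist.

Section DoubleTwist.
Variables (k : pzRingType) (C : SuperCat k).
Local Notation CC := (ctSuperCat (ctSuperCat C)).
Implicit Types O : ctOb (ctSuperCat C).

Definition dtX O : C := ctX (ctX O).
Definition dtphi O : hom C (Pi C (dtX O)) (dtX O) := ctphi (ctX O).
Definition dtpsi O : hom C (dtX O) (dtX O) := val (ctphi O).
Definition dtval O O' (f : hom CC O O') : hom C (dtX O) (dtX O') := val (val f).

Lemma dtpsi_phi O :
  comp C (dtpsi O) (dtphi O) = - comp C (dtphi O) (fhom (Pi C) (dtpsi O)).
Proof. by have := ctP (ctphi O); rewrite /= => <-; rewrite comp_Nr opprK. Qed.

Lemma dtpsi_sq O : comp C (dtpsi O) (dtpsi O) = idm C (dtX O).
Proof. exact: (congr1 val (ctphi_sq O)). Qed.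

Lemma dtphi_sq O : comp C (dtphi O) (fhom (Pi C) (dtphi O)) = xi C (dtX O).
Proof. exact: ctphi_sq. Qed.

Lemma dtpsi_Pi O : dtpsi (ctPiOb O) = - dtpsi O.
Proof. by []. Qed.

Lemma dtval_phi O O' (f : hom CC O O') :
  comp C (dtval f) (dtphi O) = comp C (dtphi O') (fhom (Pi C) (dtval f)).
Proof. exact: ctP. Qed.

Lemma dtval_psi O O' (f : hom CC O O') :
  comp C (dtval f) (dtpsi O) = comp C (dtpsi O') (dtval f).
Proof. exact: (congr1 val (ctP f)). Qed.

Lemma dtval_lin O O' a (f g : hom CC O O') :
  dtval (a *: f + g) = a *: dtval f + dtval g.
Proof. by rewrite /dtval !val_lin. Qed.

Definition dtphi_inv O : hom C (dtX O) (Pi C (dtX O)) :=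
  proj1_sig (constructive_indefinite_description _ (ctphi_iso (ctX O))).

Lemma dtphi_invP O :
  comp C (dtphi_inv O) (dtphi O) = idm C _ /\ comp C (dtphi O) (dtphi_inv O) = idm C _.
Proof. exact: proj2_sig (constructive_indefinite_description _ (ctphi_iso (ctX O))). Qed.

Lemma dtphi_invK O : comp C (dtphi_inv O) (dtphi O) = idm C _.
Proof. exact: (dtphi_invP O).1. Qed.

Lemma dtphiK O : comp C (dtphi O) (dtphi_inv O) = idm C _.
Proof. exact: (dtphi_invP O).2. Qed.

Lemma dtval_phi_inv O O' (f : hom CC O O') :
  comp C (fhom (Pi C) (dtval f)) (dtphi_inv O) = comp C (dtphi_inv O') (dtval f).
Proof.
rewrite -[LHS]comp1m -(dtphi_invK O') -compA (compA (dtphi O')) -dtval_phi.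
by rewrite -compA dtphiK compm1.
Qed.

Hypothesis Cadd : additive_cat C.

Definition Gbip (Y : C) : biprod Y (Pi C Y) :=
  epsilon (biprod_inhabited Y (Pi C Y) Cadd) (fun _ => True).

Local Notation GS Y := (bip_obj (Gbip Y)).
Local Notation in1 Y := (bip_in1 (Gbip Y)).
Local Notation in2 Y := (bip_in2 (Gbip Y)).
Local Notation pr1 Y := (bip_pr1 (Gbip Y)).
Local Notation pr2 Y := (bip_pr2 (Gbip Y)).

(* On Y (+) Pi Y: phi = [[0, xi], [1, 0]] and psi = diag(1, -1). *)
Definition Gphi (Y : C) : hom C (Pi C (GS Y)) (GS Y) :=
  comp C (in1 Y) (comp C (xi C Y) (fhom (Pi C) (pr2 Y)))
  + comp C (in2 Y) (fhom (Pi C) (pr1 Y)).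

Definition Gpsi (Y : C) : hom C (GS Y) (GS Y) :=
  comp C (in1 Y) (pr1 Y) - comp C (in2 Y) (pr2 Y).

Lemma Gphi_in1 (Y : C) : comp C (Gphi Y) (fhom (Pi C) (in1 Y)) = in2 Y.
Proof.
rewrite /Gphi compDl -!compA (fhom_comp0 _ (bip_pr2_in1 _)).
by rewrite (fhom_comp1 _ (bip_pr1_in1 _)) !comp_0r compm1 add0r.
Qed.

Lemma Gphi_in2 (Y : C) :
  comp C (Gphi Y) (fhom (Pi C) (in2 Y)) = comp C (in1 Y) (xi C Y).
Proof.
rewrite /Gphi compDl -!compA (fhom_comp0 _ (bip_pr1_in2 _)).
by rewrite (fhom_comp1 _ (bip_pr2_in2 _)) !comp_0r compm1 addr0.
Qed.

Lemma Gpsi_in1 (Y : C) : comp C (Gpsi Y) (in1 Y) = in1 Y.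
Proof. by rewrite /Gpsi compBl -!compA bip_pr1_in1 bip_pr2_in1 comp_0r compm1 subr0. Qed.

Lemma Gpsi_in2 (Y : C) : comp C (Gpsi Y) (in2 Y) = - in2 Y.
Proof. by rewrite /Gpsi compBl -!compA bip_pr1_in2 bip_pr2_in2 comp_0r compm1 sub0r. Qed.

Lemma Gphi_sq (Y : C) : comp C (Gphi Y) (fhom (Pi C) (Gphi Y)) = xi C _.
Proof.
apply: (hom_ext_sum (fhom_sum (Pi C) (fhom_sum (Pi C) (bip_sum (Gbip Y))))).
- by rewrite -compA -fcomp Gphi_in1 Gphi_in2 -xi_nat.
- by rewrite -compA -fcomp Gphi_in2 fcomp compA Gphi_in1 -xi_nat xi_Pi.
Qed.

Lemma Gpsi_sq (Y : C) : comp C (Gpsi Y) (Gpsi Y) = idm C _.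
Proof.
apply: (hom_ext_sum (bip_sum (Gbip Y))).
- by rewrite -compA !Gpsi_in1 comp1m.
- by rewrite -compA !Gpsi_in2 comp_Nr Gpsi_in2 opprK comp1m.
Qed.

Definition Gob1 (Y : C) : ctOb C := CtOb (is_iso_Pi_sqrt (Gphi_sq Y)) (Gphi_sq Y).

Lemma Gpsi_ct (Y : C) : ct_pred (ctPiOb (Gob1 Y)) (Gob1 Y) (Gpsi Y).
Proof.
apply/eqP => /=; rewrite comp_Nr.
apply: (hom_ext_sum (fhom_sum (Pi C) (bip_sum (Gbip Y)))).
- by rewrite comp_Nl -!compA -fcomp Gpsi_in1 Gphi_in1 Gpsi_in2 opprK.
- by rewrite comp_Nl -!compA -fcomp Gpsi_in2 fhomN comp_Nr Gphi_in2 compA Gpsi_in1.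
Qed.

Definition Gpsi1 (Y : C) : hom (ctSuperCat C) (ctPiOb (Gob1 Y)) (Gob1 Y) :=
  exist _ (Gpsi Y) (Gpsi_ct Y).

Lemma GpsiH_iso (Y : C) : is_iso (Gpsi1 Y).
Proof.
exists (exist _ (Gpsi Y) (ct_pred_inv (Gpsi_ct Y) (Gpsi_sq Y) (Gpsi_sq Y))).
by split; apply: val_inj; rewrite /= Gpsi_sq.
Qed.

Lemma GpsiH_sq (Y : C) :
  comp (ctSuperCat C) (Gpsi1 Y) (fhom (Pi (ctSuperCat C)) (Gpsi1 Y))
  = xi (ctSuperCat C) (Gob1 Y).
Proof. by apply: val_inj; rewrite /= Gpsi_sq. Qed.

Definition Gob (Y : C) : ctOb (ctSuperCat C) := CtOb (GpsiH_iso Y) (GpsiH_sq Y).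

Definition Gmor (Y Y' : C) (f : hom C Y Y') : hom C (GS Y) (GS Y') :=
  comp C (in1 Y') (comp C f (pr1 Y))
  + comp C (in2 Y') (comp C (fhom (Pi C) f) (pr2 Y)).

Lemma Gmor_in1 (Y Y' : C) (f : hom C Y Y') :
  comp C (Gmor f) (in1 Y) = comp C (in1 Y') f.
Proof. by rewrite /Gmor compDl -!compA bip_pr1_in1 bip_pr2_in1 !comp_0r compm1 addr0. Qed.

Lemma Gmor_in2 (Y Y' : C) (f : hom C Y Y') :
  comp C (Gmor f) (in2 Y) = comp C (in2 Y') (fhom (Pi C) f).
Proof. by rewrite /Gmor compDl -!compA bip_pr1_in2 bip_pr2_in2 !comp_0r compm1 add0r. Qed.

Lemma pr1_Gmor (Y Y' : C) (f : hom C Y Y') :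
  comp C (pr1 Y') (Gmor f) = comp C f (pr1 Y).
Proof. by rewrite /Gmor compDr !compA bip_pr1_in1 bip_pr1_in2 !comp_0l comp1m addr0. Qed.

Lemma Gmor_ct (Y Y' : C) (f : hom C Y Y') : ct_pred (Gob1 Y) (Gob1 Y') (Gmor f).
Proof.
apply/eqP => /=; apply: (hom_ext_sum (fhom_sum (Pi C) (bip_sum (Gbip Y)))).
- by rewrite -!compA -fcomp Gphi_in1 Gmor_in1 Gmor_in2 fcomp compA Gphi_in1.
- rewrite -!compA -fcomp Gphi_in2 Gmor_in2 fcomp compA Gmor_in1 compA Gphi_in2.
  by rewrite -!compA xi_nat.
Qed.

Lemma Gmor_ct2 (Y Y' : C) (f : hom C Y Y') :
  ct_pred (Gob Y) (Gob Y') (exist _ (Gmor f) (Gmor_ct f)).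
Proof.
apply/eqP; apply: val_inj => /=; apply: (hom_ext_sum (bip_sum (Gbip Y))).
- by rewrite -!compA Gpsi_in1 Gmor_in1 compA Gpsi_in1.
- by rewrite -!compA Gpsi_in2 comp_Nr Gmor_in2 compA Gpsi_in2 comp_Nl.
Qed.

Definition Ghom (Y Y' : C) (f : hom C Y Y') : hom CC (Gob Y) (Gob Y') :=
  exist _ (exist _ (Gmor f) (Gmor_ct f)) (Gmor_ct2 f).

Lemma Ghom_comp (X Y Z : C) (g : hom C Y Z) (f : hom C X Y) :
  Ghom (comp C g f) = comp CC (Ghom g) (Ghom f).
Proof.
do 2 apply: val_inj => /=; apply: (hom_ext_sum (bip_sum (Gbip X))).
- by rewrite Gmor_in1 -compA Gmor_in1 (compA (Gmor g)) Gmor_in1 compA.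
- by rewrite Gmor_in2 -compA Gmor_in2 (compA (Gmor g)) Gmor_in2 fcomp compA.
Qed.

Lemma Ghom_id (X : C) : Ghom (idm C X) = idm CC (Gob X).
Proof.
do 2 apply: val_inj => /=; apply: (hom_ext_sum (bip_sum (Gbip X))).
- by rewrite Gmor_in1 comp1m compm1.
- by rewrite Gmor_in2 fid comp1m compm1.
Qed.

Variables (u : k) (hu : 2 * u = 1).

Definition eproj O : hom C (dtX O) (dtX O) := u *: (idm C (dtX O) + dtpsi O).

Lemma psi_eproj O : comp C (dtpsi O) (eproj O) = eproj O.
Proof. by rewrite /eproj compZr compDr compm1 dtpsi_sq addrC. Qed.

Lemma eproj_idem O : comp C (eproj O) (eproj O) = eproj O.
Proof. by rewrite {1}/eproj compZl compDl comp1m psi_eproj scale_half. Qed.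

Lemma eproj_Pi O : eproj (ctPiOb O) = idm C _ - eproj O.
Proof.
apply/eqP; rewrite eq_sym subr_eq; apply/eqP.
by rewrite /eproj dtpsi_Pi -scalerDr addrACA addNr addr0 scalerDr scale_half.
Qed.

Lemma eproj_PiPi O : eproj (ctPiOb (ctPiOb O)) = eproj O.
Proof. by rewrite /eproj !dtpsi_Pi opprK. Qed.

Lemma dtval_eproj O O' (f : hom CC O O') :
  comp C (dtval f) (eproj O) = comp C (eproj O') (dtval f).
Proof. by rewrite /eproj compZr compZl compDr compDl compm1 comp1m dtval_psi. Qed.

Lemma dtval_eprojC O O' (f : hom CC O O') :
  comp C (idm C _ - eproj O') (dtval f) = comp C (dtval f) (idm C _ - eproj O).
Proof. by rewrite compBl compBr comp1m compm1 dtval_eproj. Qed.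

Lemma phi_Pi_eproj O :
  comp C (dtphi O) (fhom (Pi C) (eproj O)) = comp C (idm C _ - eproj O) (dtphi O).
Proof.
apply/eqP; rewrite compBl comp1m eq_sym subr_eq; apply/eqP.
rewrite /eproj fhomZ fhomD fid compZr compZl compDr compDl compm1 comp1m.
by rewrite dtpsi_phi -scalerDr addrACA subrr addr0 scalerDr scale_half.
Qed.

Lemma phi_Pi_eprojC O :
  comp C (dtphi O) (fhom (Pi C) (idm C _ - eproj O)) = comp C (eproj O) (dtphi O).
Proof.
by rewrite fhomB fid compBr compm1 phi_Pi_eproj compBl comp1m opprB addrC subrK.
Qed.

Lemma Pi_eproj_phi_inv O :
  comp C (fhom (Pi C) (eproj O)) (dtphi_inv O)
  = comp C (dtphi_inv O) (idm C _ - eproj O).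
Proof. exact: iso_conj (dtphi_invK O) (dtphiK O) (phi_Pi_eproj O). Qed.

Lemma Pi_eprojC_phi_inv O :
  comp C (fhom (Pi C) (idm C _ - eproj O)) (dtphi_inv O)
  = comp C (dtphi_inv O) (eproj O).
Proof. exact: iso_conj (dtphi_invK O) (dtphiK O) (phi_Pi_eprojC O). Qed.

Hypothesis Cidem : idempotent_complete C.

Definition dtsplit O : idem_split (eproj O) :=
  epsilon (idem_split_inhabited Cidem (eproj_idem O)) (fun _ => True).

Definition Fob O : C := img (dtsplit O).

Definition Fhom O O' (f : hom CC O O') : hom C (Fob O) (Fob O') :=
  comp C (ret (dtsplit O')) (comp C (dtval f) (inc (dtsplit O))).

Definition Ffun : LinFunctor CC C.
Proof.
refine {| fob := (Fob : CC -> C); fhom := Fhom |}.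
- move=> X Y Z g f; rewrite /Fhom /= !compA (comp_reassoc (inc_ret _)).
  by rewrite (comp_reassoc (esym (dtval_eproj f))) !compA (comp_reassoc (idem_inc _)).
- by move=> X; rewrite /Fhom /= comp1m ret_inc.
- by move=> X Y a f g; rewrite /Fhom dtval_lin compDl compZl compDr compZr.
Defined.

Lemma eprojC_inc_Pi O :
  comp C (idm C _ - eproj O) (inc (dtsplit (ctPiOb O))) = inc (dtsplit (ctPiOb O)).
Proof. by rewrite -eproj_Pi idem_inc. Qed.

Lemma inc_ret_Pi O :
  comp C (inc (dtsplit (ctPiOb O))) (ret (dtsplit (ctPiOb O))) = idm C _ - eproj O.
Proof. by rewrite inc_ret eproj_Pi. Qed.

Definition Falpha O : hom C (Fob (ctPiOb O)) (Pi C (Fob O)) :=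
  comp C (fhom (Pi C) (ret (dtsplit O)))
    (comp C (dtphi_inv O) (inc (dtsplit (ctPiOb O)))).

Lemma Falpha_nat O O' (f : hom CC O O') :
  comp C (fhom (Pi C) (fhom Ffun f)) (Falpha O)
  = comp C (Falpha O') (fhom Ffun (fhom (Pi CC) f)).
Proof.
rewrite /Falpha /= /Fhom !fcomp !compA (comp_reassoc (fhom_inc_ret _ (dtsplit O))).
rewrite (comp_reassoc (Pi_eproj_phi_inv O)) !compA (comp_reassoc (eprojC_inc_Pi O)).
rewrite (comp_reassoc (inc_ret_Pi O')).
have -> : dtval (fhom (Pi CC) f) = dtval f by [].
rewrite (comp_reassoc (dtval_eprojC f)) !compA (comp_reassoc (eprojC_inc_Pi O)).
by rewrite (comp_reassoc (esym (dtval_phi_inv f))) !compA.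
Qed.

Lemma Falpha_iso O : is_iso (Falpha O).
Proof.
exists (comp C (ret (dtsplit (ctPiOb O)))
          (comp C (dtphi O) (fhom (Pi C) (inc (dtsplit O))))); split.
- rewrite /Falpha !compA (comp_reassoc (fhom_inc_ret _ _)).
  rewrite (comp_reassoc (phi_Pi_eproj O)) !compA (comp_reassoc (dtphiK O)) compm1.
  by rewrite (comp_reassoc (eprojC_inc_Pi O)) ret_inc.
- rewrite /Falpha !compA (comp_reassoc (inc_ret_Pi O)) -(compA _ (_ - _)).
  rewrite -phi_Pi_eproj !compA (comp_reassoc (dtphi_invK O)) compm1.
  by rewrite (comp_reassoc (fhom_idem_inc _ _)) (fhom_comp1 _ (ret_inc _)).
Qed.

Lemma xi_Pi_phi_inv O (W : C) (h : hom C (dtX O) W) :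
  comp C (comp C (comp C h (xi C (dtX O))) (fhom (Pi C) (dtphi_inv O))) (dtphi_inv O)
  = h.
Proof.
rewrite -!compA -dtphi_sq -!compA (compA (fhom _ (dtphi O))) -fcomp dtphiK.
by rewrite fid comp1m dtphiK compm1.
Qed.

Lemma Falpha_coh O :
  comp C (xi C (Fob O)) (comp C (fhom (Pi C) (Falpha O)) (Falpha (ctPiOb O)))
  = fhom Ffun (xi CC O).
Proof.
have eproj_inc_PiPi : comp C (eproj O) (inc (dtsplit (ctPiOb (ctPiOb O))))
    = inc (dtsplit (ctPiOb (ctPiOb O))).
  by rewrite -(eproj_PiPi O) idem_inc.
rewrite /Falpha /= /Fhom !fcomp !compA.
rewrite (comp_reassoc (fhom_inc_ret _ (dtsplit (ctPiOb O)))) eproj_Pi.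
rewrite -[dtphi_inv (ctPiOb O)]/(dtphi_inv O) (comp_reassoc (Pi_eprojC_phi_inv O)).
rewrite !compA (comp_reassoc eproj_inc_PiPi) -(xi_nat (ret (dtsplit O))).
by rewrite xi_Pi_phi_inv; have -> : dtval (ctxi O) = idm C _ by []; rewrite compm1.
Qed.

Definition Fsuper : SuperFunctor CC C :=
  {| sfun := Ffun; alpha := Falpha; alpha_nat := Falpha_nat;
     alpha_iso := Falpha_iso; alpha_coh := Falpha_coh |}.

Lemma eproj_Gob (Y : C) : eproj (Gob Y) = comp C (in1 Y) (pr1 Y).
Proof.
apply: (hom_ext_sum (bip_sum (Gbip Y))); rewrite /eproj compZl compDl comp1m.
- rewrite -[dtpsi _]/(Gpsi Y) Gpsi_in1 scalerDr scale_half //.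
  by rewrite -compA bip_pr1_in1 compm1.
- by rewrite -[dtpsi _]/(Gpsi Y) Gpsi_in2 subrr scaler0 -compA bip_pr1_in2 comp_0r.
Qed.

Definition eps (Y : C) : hom C (Fob (Gob Y)) Y := comp C (pr1 Y) (inc (dtsplit (Gob Y))).

Lemma eps_iso (Y : C) : is_iso (eps Y).
Proof.
exists (comp C (ret (dtsplit (Gob Y))) (in1 Y)); split.
- by rewrite /eps compA -(compA _ (in1 Y)) -eproj_Gob ret_idem ret_inc.
- rewrite /eps compA -(compA _ (inc _)) inc_ret eproj_Gob !compA bip_pr1_in1.
  by rewrite comp1m bip_pr1_in1.
Qed.

Lemma eps_nat (Y Y' : C) (f : hom C Y Y') :
  comp C f (eps Y) = comp C (eps Y') (fhom Ffun (Ghom f)).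
Proof.
rewrite /eps /= /Fhom !compA (comp_reassoc (inc_ret _)) (eproj_Gob Y') !compA.
by rewrite bip_pr1_in1 comp1m -[dtval _]/(Gmor f) pr1_Gmor.
Qed.

Lemma psi_inc O : comp C (dtpsi O) (inc (dtsplit O)) = inc (dtsplit O).
Proof. by rewrite -{1}(idem_inc (dtsplit O)) compA psi_eproj idem_inc. Qed.

Lemma ret_phi_Pi_inc O :
  comp C (ret (dtsplit O)) (comp C (dtphi O) (fhom (Pi C) (inc (dtsplit O)))) = 0.
Proof.
rewrite -(fhom_idem_inc _ (dtsplit O)) (compA (dtphi O)) phi_Pi_eproj !compA.
by rewrite compBr compm1 ret_idem subrr !comp_0l.
Qed.

Lemma Pi_ret_phi_inv_inc O :
  comp C (fhom (Pi C) (ret (dtsplit O))) (comp C (dtphi_inv O) (inc (dtsplit O))) = 0.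
Proof.
rewrite -(idem_inc (dtsplit O)) (compA (dtphi_inv O)) -Pi_eprojC_phi_inv !compA -fcomp.
by rewrite compBr compm1 ret_idem subrr fhom0 !comp_0l.
Qed.

Definition eta_mor O : hom C (GS (Fob O)) (dtX O) :=
  comp C (inc (dtsplit O)) (pr1 (Fob O))
  + comp C (dtphi O) (comp C (fhom (Pi C) (inc (dtsplit O))) (pr2 (Fob O))).

Definition eta_inv O : hom C (dtX O) (GS (Fob O)) :=
  comp C (in1 (Fob O)) (ret (dtsplit O))
  + comp C (in2 (Fob O)) (comp C (fhom (Pi C) (ret (dtsplit O))) (dtphi_inv O)).

Lemma eta_mor_in1 O : comp C (eta_mor O) (in1 (Fob O)) = inc (dtsplit O).
Proof.
by rewrite /eta_mor compDl -!compA bip_pr1_in1 bip_pr2_in1 !comp_0r compm1 addr0.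
Qed.

Lemma eta_mor_in2 O :
  comp C (eta_mor O) (in2 (Fob O)) = comp C (dtphi O) (fhom (Pi C) (inc (dtsplit O))).
Proof.
by rewrite /eta_mor compDl -!compA bip_pr1_in2 bip_pr2_in2 !comp_0r compm1 add0r.
Qed.

Lemma eta_morK O : comp C (eta_mor O) (eta_inv O) = idm C _.
Proof.
rewrite /eta_inv compDr !compA eta_mor_in1 eta_mor_in2 inc_ret.
rewrite (comp_reassoc (fhom_inc_ret _ _)) phi_Pi_eproj -compA dtphiK compm1.
by rewrite addrC subrK.
Qed.

Lemma eta_invK O : comp C (eta_inv O) (eta_mor O) = idm C _.
Proof.
apply: (hom_ext_sum (bip_sum (Gbip (Fob O)))).
- rewrite -compA eta_mor_in1 /eta_inv compDl -!compA ret_inc compm1.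
  by rewrite Pi_ret_phi_inv_inc comp_0r addr0 comp1m.
- rewrite -compA eta_mor_in2 /eta_inv compDl -!compA ret_phi_Pi_inc comp_0r add0r.
  rewrite (compA (dtphi_inv O)) dtphi_invK comp1m (fhom_comp1 _ (ret_inc _)).
  by rewrite compm1 comp1m.
Qed.

Lemma eta_mor_ct O : ct_pred (Gob1 (Fob O)) (ctX O) (eta_mor O).
Proof.
apply/eqP => /=; apply: (hom_ext_sum (fhom_sum (Pi C) (bip_sum (Gbip (Fob O))))).
- by rewrite -!compA Gphi_in1 eta_mor_in2 -fcomp eta_mor_in1.
- rewrite -!compA Gphi_in2 compA eta_mor_in1 -fcomp eta_mor_in2 fcomp compA.
  by rewrite -[ctphi (ctX O)]/(dtphi O) dtphi_sq xi_nat.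
Qed.

Definition eta1 O : hom (ctSuperCat C) (ctX (Gob (Fob O))) (ctX O) :=
  exist _ (eta_mor O) (eta_mor_ct O).

Lemma eta_mor_ct2 O : ct_pred (Gob (Fob O)) O (eta1 O).
Proof.
apply/eqP; apply: val_inj => /=; apply: (hom_ext_sum (bip_sum (Gbip (Fob O)))).
- by rewrite -!compA Gpsi_in1 eta_mor_in1 -[sval (ctphi O)]/(dtpsi O) psi_inc.
- rewrite -[sval (ctphi O)]/(dtpsi O) -!compA Gpsi_in2 comp_Nr eta_mor_in2.
  by rewrite compA dtpsi_phi comp_Nl -compA -fcomp psi_inc.
Qed.

Definition eta O : hom CC (Gob (Fob O)) O := exist _ (eta1 O) (eta_mor_ct2 O).

Lemma eta_iso O : is_iso (eta O).
Proof.
have inv_ct := ct_pred_inv (eta_mor_ct O) (eta_invK O) (eta_morK O).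
pose inv1 : hom (ctSuperCat C) (ctX O) (ctX (Gob (Fob O))) :=
  @exist _ (ct_pred _ _) _ inv_ct.
have inv_ct2 : ct_pred O (Gob (Fob O)) inv1.
  by apply: (ct_pred_inv (eta_mor_ct2 O)); apply: val_inj; rewrite /= ?eta_invK ?eta_morK.
exists (exist _ inv1 inv_ct2).
by split; do 2 apply: val_inj; rewrite /= ?eta_invK ?eta_morK.
Qed.

Lemma eta_nat O O' (f : hom CC O O') :
  comp CC f (eta O) = comp CC (eta O') (Ghom (fhom Ffun f)).
Proof.
have inc_Fhom : comp C (inc (dtsplit O')) (Fhom f) = comp C (dtval f) (inc (dtsplit O)).
  by rewrite /Fhom !compA inc_ret -dtval_eproj -compA idem_inc.
do 2 apply: val_inj => /=; apply: (hom_ext_sum (bip_sum (Gbip (Fob O)))).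
- by rewrite -!compA eta_mor_in1 Gmor_in1 compA eta_mor_in1 inc_Fhom.
- rewrite -!compA eta_mor_in2 Gmor_in2 compA eta_mor_in2 -compA -fcomp inc_Fhom.
  by rewrite fcomp compA -dtval_phi compA.
Qed.

End DoubleTwist.

Theorem mainTheorem11 (k : comPzRingType) (two_inv : exists u : k, 2 * u = 1)
    (C : SuperCat k) (C_additive : additive_cat C)
    (C_idem : idempotent_complete C) :
  exists F : SuperFunctor (ctSuperCat (ctSuperCat C)) C, is_super_equivalence F.
Proof.
case: two_inv => u hu.
exists (Fsuper hu C_idem).
exists (Gob C_additive), (@Ghom k C C_additive).
split; first exact: Ghom_comp.
split; first exact: Ghom_id.
split.
- by exists (eta C_additive hu C_idem); split; [exact: eta_nat | exact: eta_iso].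
- by exists (eps C_additive hu C_idem); split; [exact: eps_nat | exact: eps_iso].
Qed.
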